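(* Let $\pi\in\mathsf{G}_{r,n}$ and $b=\text{B-code}(\pi)$. Then for each $1\le t\le r-1$: (1) $\mathsf{Cyc}^0(\pi)=\mathsf{Max}^0(b)$ and $\mathsf{Cyc}^t(\pi)=\mathsf{Max}^{r-t}(b)$; (2) $\mathsf{Lmic}^0(\pi)=\mathsf{Min}^0(b)$ and $\mathsf{Lmic}^t(\pi)=\mathsf{Min}^{r-t}(b)$; (3) $\mathsf{Lmap}^0(\pi)=\mathsf{Rmil}^0(b)$ and $\mathsf{Lmap}^t(\pi)=\mathsf{Rmil}^{r-t}(b)$; (4) $\mathsf{Lmal}^0(\pi)=\mathsf{Rmip}^0(b)$ and $\mathsf{Lmal}^t(\pi)=\mathsf{Rmip}^{r-t}(b)$.
   Context: $\mathsf{G}_{r,n}=C_r\wr\mathfrak S_n$: words $\pi=\sigma_1^{[z_1]}\cdots\sigma_n^{[z_n]}$, $\sigma\in\mathfrak S_n$, colors $z_i\in\mathbb Z/r$ (represented in $\{0,\dots,r-1\}$). $\pi$ acts on $\Sigma=\{i^{[t]}:i\in[n],t\in\mathbb Z/r\}$ by $\pi(i^{[t]})=\sigma_i^{[z_i+t]}$; $i^{[0]}$ is written $i$. For $1\le i<j$, right multiplication of a word $\tau_1^{[y_1]}\cdots\tau_j^{[y_j]}$ by $(i^{[t]}\,j)$ replaces the letter in position $j$ by $\tau_i^{[y_i+t]}$ and the letter in position $i$ by $\tau_j^{[y_j-t]}$. B-code: $\pi^{(n)}=\pi$; for $j=n,\dots,1$, $c_j$ = position in $\pi^{(j)}$ of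 the letter with base value $j$, $z$ its color, $e_j\equiv -z\pmod r$ in $\{0,\dots,r-1\}$; $\pi^{(j-1)}$ = first $j-1$ letters of $\pi^{(j)}\cdot(c_j^{[e_j]}\,j)$ if $c_j<j$, of $\pi^{(j)}$ if $c_j=j$. $\text{B-code}(\pi)=(c_1^{[e_1]},\dots,c_n^{[e_n]})$. Statistics of $\pi$: $\mathsf{Lmal}(\pi)=\{\sigma_i^{[z_i]}:\sigma_i>\sigma_j\ \forall j<i\}$; $\mathsf{Lmap}(\pi)=\{i^{[z_i]}:\sigma_i>\sigma_j\ \forall j<i\}$; for a word $w_1\cdots w_m$ of colored letters, $\mathsf{Lmil}(w)$ is the set of $w_k$ whose base value is smaller than the base values of all $w_{k'}$, $k'<k$. $\mathsf{Cyc}(\pi)$: for each cycle of $\sigma$ with element set $B$, take $\alpha=\min B$ and $c\equiv\sum_{k\in B}z_k\pmod r$; $\mathsf{Cyc}(\pi)$ is the set of all such $\alpha^{[c]}$. $\mathsf{Lmic}(\pi)=\mathsf{Lmil}(\pi(1)\,\pi^2(1)\cdots\pi^m(1))$ where $m\ge1$ is least with $\pi^m(1)=1$. Statistics of $b=(c_1^{[e_1]},\dots,c_n^{[e_n]})$: $\mathsf{Max}(b)=\{i^{[e_i]}:c_i=i\}$, $\mathsf{Min}(b)=\{i^{[e_i]}:c_i=1\}$, $\mathsf{Rmil}(b)=\{c_i^{[e_i]}:c_i<c_j\ \forall j>i\}$, $\mathsf{Rmip}(b)=\{i^{[e_i]}:c_i<c_j\ \forall j>i\}$. For a set $S$ of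 colored letters, $S^t=\{k:k^{[t]}\in S\}$. *)

(* Colored permutations of G_{r,n} are represented as words:
   a seq of colored letters (base value, color), positions are 1-based. *)
From mathcomp Require Import all_boot.
Set Implicit Arguments. Unset Strict Implicit. Unset Printing Implicit Defensive.

Definition cletter := (nat * nat)%type.   (* (base value, color) *)

Definition letter (w : seq cletter) (i : nat) : cletter := nth (0, 0) w i.-1.

Definition act (r : nat) (w : seq cletter) (x : cletter) : cletter :=
  ((letter w x.1).1, ((letter w x.1).2 + x.2) %% r).

(* right multiplication of a word by the colored transposition (i^[t] j), i<j *)
Definition mul_transp (r : nat) (w : seq cletter) (i t j : nat) : seq cletter :=
  let li := letter w i in let lj := letter w j in
  set_nth (0, 0) (set_nth (0, 0) w j.-1 (li.1, (li.2 + t) %% r))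
          i.-1 (lj.1, (lj.2 + (r - t %% r)) %% r).

Definition pos (w : seq cletter) (j : nat) : nat := (find (fun x => x.1 == j) w).+1.

(* bcode_rec r w j computes (c_1^[e_1], ..., c_j^[e_j]) from pi^(j) = w *)
Fixpoint bcode_rec (r : nat) (w : seq cletter) (j : nat) : seq cletter :=
  match j with
  | 0 => [::]
  | j'.+1 =>
    let c := pos w j in
    let z := (letter w c).2 in
    let e := (r - z %% r) %% r in
    let w' := take j' (if c < j then mul_transp r w c e j else w) in
    rcons (bcode_rec r w' j') (c, e)
  end.

Definition bcode (r : nat) (w : seq cletter) : seq cletter := bcode_rec r w (size w).

Definition sup (t : nat) (S : seq cletter) : seq nat := [seq x.1 | x <- S & x.2 == t].

Definition Lmal (w : seq cletter) : seq cletter :=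
  [seq letter w i | i <- iota 1 (size w) &
     all (fun j => (letter w j).1 < (letter w i).1) (iota 1 i.-1)].

Definition Lmap (w : seq cletter) : seq cletter :=
  [seq (i, (letter w i).2) | i <- iota 1 (size w) &
     all (fun j => (letter w j).1 < (letter w i).1) (iota 1 i.-1)].

Definition Lmil (u : seq cletter) : seq cletter :=
  [seq nth (0, 0) u k | k <- iota 0 (size u) &
     all (fun k' => (nth (0, 0) u k).1 < (nth (0, 0) u k').1) (iota 0 k)].

Definition sig (w : seq cletter) (i : nat) : nat := (letter w i).1.

Definition cyc_of (w : seq cletter) (i : nat) : seq nat :=
  undup [seq iter k (sig w) i | k <- iota 0 (size w)].

Definition Cyc (r : nat) (w : seq cletter) : seq cletter :=
  [seq (i, sumn [seq (letter w k).2 | k <- cyc_of w i] %% r) |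
     i <- iota 1 (size w) & all (fun k => i <= k) (cyc_of w i)].

(* m = least m >= 1 with pi^m(1) = 1 (= 1^[0]); exists with m <= n*r *)
Definition lmic_len (r : nat) (w : seq cletter) : nat :=
  (find (fun k => iter k.+1 (act r w) (1, 0) == (1, 0)) (iota 0 (size w * r))).+1.

Definition Lmic (r : nat) (w : seq cletter) : seq cletter :=
  Lmil [seq iter k.+1 (act r w) (1, 0) | k <- iota 0 (lmic_len r w)].

Definition Max (b : seq cletter) : seq cletter :=
  [seq (i, (letter b i).2) | i <- iota 1 (size b) & (letter b i).1 == i].

Definition Min (b : seq cletter) : seq cletter :=
  [seq (i, (letter b i).2) | i <- iota 1 (size b) & (letter b i).1 == 1].

Definition rmi (b : seq cletter) (i : nat) : bool :=
  all (fun j => (letter b i).1 < (letter b j).1) (iota i.+1 (size b - i)).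

Definition Rmil (b : seq cletter) : seq cletter :=
  [seq letter b i | i <- iota 1 (size b) & rmi b i].

Definition Rmip (b : seq cletter) : seq cletter :=
  [seq (i, (letter b i).2) | i <- iota 1 (size b) & rmi b i].

From mathcomp Require Import all_boot zify.
Set Implicit Arguments. Unset Strict Implicit. Unset Printing Implicit Defensive.

(* Induction on n along one step of the B-code.  If the letter n+1 of pi sits at
   position c with color z, the step pi -> pi' multiplies pi by (c^[-z] n+1); this
   turns the last letter into (n+1)^[0], which is dropped, and B-code(pi) is
   B-code(pi') followed by c^[-z].  In cycle notation pi' is pi with n+1 cut out of
   its cycle, its color being added to that of its predecessor c.  Hence the cycles
   of pi' are those of pi with n+1 removed and with the same color sums, while (n+1)
   is a cycle of pi iff c = n+1; the orbit of 1^[0] under pi' is that under pi with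
   the points of base value n+1 skipped, and pi(1) = n+1 iff c = 1; and the
   left-to-right maxima of pi are those of pi' left of c together with c itself.
   On the B-code side, the new last entry c^[-z] is always a right-to-left minimum
   and turns the earlier ones with value > c into non-minima. *)

Lemma iter_return (T : eqType) (g : T -> T) (s : seq T) x :
  {in s, forall y, g y \in s} -> {in s &, injective g} -> x \in s ->
  exists2 p, 0 < p <= size s & iter p g x = x.
Proof.
move=> gs ginj xs.
have its k : iter k g x \in s by elim: k => //= k IH; apply: gs.
set l := [seq iter k g x | k <- iota 0 (size s).+1].
have : ~~ uniq l.
  apply/negP => ul; have := uniq_leq_size ul (s2 := s).
  rewrite /l size_map size_iota ltnn => H; suff : false by []; apply: H.
  by move=> y /mapP [k _ ->].
case/(uniqPn x) => i [j [ij jl]].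
rewrite size_map size_iota in jl.
rewrite !(nth_map 0) ?size_iota //; last by lia.
rewrite !nth_iota ?add0n; try lia.
move=> e; exists (j - i); first lia.
have ej : j = i + (j - i) by lia.
move: e; rewrite {1}ej iterD.
move: (j - i) => d; clear ij jl ej.
elim: i => [|i IH] //= e; apply: IH.
by apply: ginj => //; rewrite -iterD its.
Qed.

Lemma iter_modn (T : Type) (g : T -> T) p x k :
  iter p g x = x -> iter k g x = iter (k %% p) g x.
Proof.
move=> hp; rewrite {1}(divn_eq k p) addnC iterD; congr iter.
by elim: (k %/ p) => //= q IH; rewrite mulSn iterD IH hp.
Qed.

Definition reach_via (T : Type) (g : T -> T) (P : pred T) x y k :=
  iter k g x = y /\ forall k', k' < k -> P (iter k' g x).

Lemma reach_viaS (T : Type) (g : T -> T) P x y k :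
  reach_via g P x y k.+1 <-> P x /\ reach_via g P (g x) y k.
Proof.
rewrite /reach_via iterSr; split.
  case=> e H; split; first exact: (H 0).
  by split=> // k' lt; rewrite -iterSr; apply: H.
case=> Px [e H]; split=> // [[|k']] // lt; rewrite iterSr; exact: H.
Qed.

Section Shortcut.
Variables (T : eqType) (D q P : pred T) (g g' : T -> T).
Hypothesis gD : forall x, D x -> D (g x).
Hypothesis q_isolated : forall x, D x -> ~~ q x -> q (g x) -> ~~ q (g (g x)).
Hypothesis g'E : forall x, D x -> ~~ q x -> g' x = if q (g x) then g (g x) else g x.
Hypothesis qP : forall x, q x -> P x.

Lemma shortcut_inv x : D x -> ~~ q x -> D (g' x) /\ ~~ q (g' x).
Proof.
move=> Dx qx; rewrite g'E //; case: ifP => qg; last by rewrite qg; split=> //; apply: gD.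
by split; [apply/gD/gD | exact: q_isolated].
Qed.

Lemma reach_via_shortcut x y : D x -> ~~ q x -> ~~ q y ->
  (exists k, reach_via g' P x y k) <-> (exists k, reach_via g P x y k).
Proof.
move=> Dx qx qy; split.
  case=> k; elim: k x Dx qx => [|k IH] x Dx qx.
    by case=> /= e _; exists 0; split.
  case/reach_viaS => Px R.
  have [Dg' qg'] := shortcut_inv Dx qx.
  have [K] := IH _ Dg' qg' R.
  rewrite g'E //; case: ifP => qg RK.
    by exists K.+2; apply/reach_viaS; split=> //; apply/reach_viaS; split=> //; apply: qP.
  by exists K.+1; apply/reach_viaS.
case=> K; elim: K {-2}K (leqnn K) x Dx qx => [|N IH] [|K] lK x Dx qx //;
  try by case=> /= e _; exists 0; split.
case/reach_viaS => Px R.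
case qg : (q (g x)).
  case: K lK R => [|K] lK R; first by case: R => /= e; rewrite -e qg in qy.
  case/reach_viaS: R => _ R.
  have [|k Rk] := IH K _ _ (gD (gD Dx)) (q_isolated Dx qx qg) R; first lia.
  by exists k.+1; apply/reach_viaS; split=> //; rewrite g'E // qg.
have [|k Rk] := IH K _ _ (gD Dx) (negbT qg) R; first lia.
by exists k.+1; apply/reach_viaS; split=> //; rewrite g'E // qg.
Qed.

End Shortcut.

Definition oppc r z := (r - z %% r) %% r.

Lemma oppcE r z : z < r -> oppc r z = if z == 0 then 0 else r - z.
Proof.
move=> zr; rewrite /oppc (modn_small zr); case: z zr => [|z] zr; first by rewrite subn0 modnn.
by rewrite /= modn_small; lia.
Qed.

Lemma oppcK r z : z < r -> oppc r (oppc r z) = z.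
Proof.
move=> zr; rewrite [oppc r z]oppcE //.
case: eqP => [->|z0]; first by rewrite /oppc mod0n subn0 modnn.
rewrite oppcE; last lia.
by case: eqP; lia.
Qed.

Lemma eqn_oppc r z z' : z < r -> z' < r -> (oppc r z == oppc r z') = (z == z').
Proof.
move=> zr z'r; rewrite !oppcE //.
case: z zr => [|z] zr; case: z' z'r => [|z'] z'r //=; apply/eqP/eqP; lia.
Qed.

Lemma mem_iota1 x n : (x \in iota 1 n) = (0 < x <= n).
Proof. by rewrite mem_iota add1n ltnS. Qed.

Record colored_perm (r N : nat) (w : seq cletter) : Prop := ColoredPerm {
  cp_size : size w = N;
  cp_sig_range : forall i, 0 < i <= N -> 0 < sig w i <= N;
  cp_sig_inj : forall i j, 0 < i <= N -> 0 < j <= N -> sig w i = sig w j -> i = j;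
  cp_sig_surj : forall v, 0 < v <= N -> exists2 i, 0 < i <= N & sig w i = v;
  cp_color : forall i, 0 < i <= N -> (letter w i).2 < r }.

Lemma sig_nth w i : i.-1 < size w -> sig w i = nth 0 (map fst w) i.-1.
Proof. by move=> h; rewrite /sig /letter (nth_map (0, 0)). Qed.

Lemma colored_permP r n w :
  perm_eq (map fst w) (iota 1 n) -> all (fun x => x.2 < r) w -> colored_perm r n w.
Proof.
move=> pe ac.
have sz : size w = n by rewrite -(size_map fst) (perm_size pe) size_iota.
have un : uniq (map fst w) by rewrite (perm_uniq pe) iota_uniq.
split=> //.
- move=> i hi; rewrite sig_nth; last by rewrite sz; lia.
  have : nth 0 (map fst w) i.-1 \in iota 1 n.
    by rewrite -(perm_mem pe) mem_nth // size_map sz; lia.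
  by rewrite mem_iota1.
- move=> i j hi hj; rewrite !sig_nth ?sz; try lia.
  move=> e; suff : i.-1 = j.-1 by lia.
  by apply/eqP; rewrite -(nth_uniq 0 _ _ un) ?size_map ?sz ?e //; lia.
- move=> v hv; have vin : v \in map fst w by rewrite (perm_mem pe) mem_iota1.
  exists (index v (map fst w)).+1.
    by move: vin; rewrite -index_mem size_map sz; lia.
  by rewrite sig_nth /= ?nth_index //; move: vin; rewrite -index_mem size_map.
- by move=> i hi; move/allP: ac; apply; rewrite /letter mem_nth // sz; lia.
Qed.

Lemma pos_top r n w :
  colored_perm r n.+1 w -> 0 < pos w n.+1 <= n.+1 /\ sig w (pos w n.+1) = n.+1.
Proof.
case=> sz _ _ surj _.
have [i hi si] := surj n.+1 (leqnn _).
have hs : has (fun x : cletter => x.1 == n.+1) w.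
  apply/hasP; exists (letter w i); last by rewrite -/(sig w i) si.
  by rewrite /letter mem_nth // sz; lia.
move: (hs); rewrite has_find sz => lt; split; first by rewrite /pos; apply/andP.
by apply/eqP; apply: (nth_find (0, 0) hs).
Qed.

Definition bstep r w n :=
  let c := pos w n.+1 in
  take n (if c < n.+1 then mul_transp r w c (oppc r (letter w c).2) n.+1 else w).

Lemma size_bstep r w n : size w = n.+1 -> size (bstep r w n) = n.
Proof.
move=> sz; rewrite /bstep size_take ifT //.
by case: (_ < n.+1); rewrite /mul_transp ?size_set_nth sz; lia.
Qed.

Lemma bcode_rcons r w n : size w = n.+1 ->
  bcode r w = rcons (bcode r (bstep r w n)) (pos w n.+1, oppc r (letter w (pos w n.+1)).2).
Proof. by move=> sz; rewrite /bcode size_bstep // sz. Qed.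

Lemma size_bcode r w : size (bcode r w) = size w.
Proof.
by rewrite /bcode; move: (size w) => j; elim: j w => //= j IH w; rewrite size_rcons IH.
Qed.

Lemma letter_bstep r n w i : colored_perm r n.+1 w -> 0 < i <= n ->
  letter (bstep r w n) i =
  if i == pos w n.+1 then (sig w n.+1, ((letter w n.+1).2 + (letter w (pos w n.+1)).2) %% r)
  else letter w i.
Proof.
move=> V hi; have [hc sc] := pos_top V.
have zr : (letter w (pos w n.+1)).2 < r by apply: (cp_color V).
rewrite /bstep; move: (pos w n.+1) hc sc zr => c hc sc zr.
rewrite /letter nth_take; last lia.
case: ifP => cn; last by have -> : (i == c) = false by apply/eqP; lia.
rewrite /mul_transp !nth_set_nth /=.
have -> : (i.-1 == c.-1) = (i == c) by apply/eqP/eqP; lia.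
case: ifP => _; last by rewrite nth_set_nth /= (_ : i.-1 == n = false) //; apply/eqP; lia.
by rewrite /sig /letter /= -modnDmr -/(oppc r _) oppcK.
Qed.

Lemma sig_eq_top r n w i : colored_perm r n.+1 w -> 0 < i <= n.+1 ->
  (sig w i == n.+1) = (i == pos w n.+1).
Proof.
move=> V hi; have [hc sc] := pos_top V.
by apply/eqP/eqP => [e|->//]; apply: (cp_sig_inj V) => //; rewrite e sc.
Qed.

Lemma sig_bstep r n w i : colored_perm r n.+1 w -> 0 < i <= n ->
  sig (bstep r w n) i = if sig w i == n.+1 then sig w n.+1 else sig w i.
Proof. by move=> V hi; rewrite (sig_eq_top V) /sig ?letter_bstep //; [case: ifP | lia]. Qed.

Lemma colored_perm_bstep r n w : colored_perm r n.+1 w -> colored_perm r n (bstep r w n).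
Proof.
move=> V; have [hc sc] := pos_top V.
have rg i : 0 < i <= n.+1 -> 0 < sig w i <= n.+1 by apply: (cp_sig_range V).
have inj i j : 0 < i <= n.+1 -> 0 < j <= n.+1 -> sig w i = sig w j -> i = j.
  exact: (cp_sig_inj V).
have topN := sig_eq_top V (i := n.+1) ltac:(lia).
split.
- by apply: size_bstep; apply: (cp_size V).
- move=> i hi; rewrite sig_bstep //.
  case: ifP => [/eqP iN | /negbT iN]; last by have := rg i ltac:(lia); lia.
  have ic : i == pos w n.+1 by rewrite -(sig_eq_top V) ?iN //; lia.
  have : sig w n.+1 != n.+1 by rewrite topN; apply/eqP => e; move/eqP: ic; lia.
  by have := rg n.+1 ltac:(lia); lia.
- move=> i j hi hj; rewrite !sig_bstep //.
  case: eqP => ic; case: eqP => jc e.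
  + by apply: inj; rewrite ?ic ?jc //; lia.
  + by have := inj n.+1 j ltac:(lia) ltac:(lia) e; lia.
  + by have := inj i n.+1 ltac:(lia) ltac:(lia) e; lia.
  + by apply: inj => //; lia.
- move=> v hv; have [i hi si] := cp_sig_surj V (v := v) ltac:(lia).
  case: (ltnP n i) => ni.
    have iN : i = n.+1 by lia.
    subst i; have /eqP cN : n.+1 != pos w n.+1 by rewrite -topN si; apply/eqP; lia.
    by exists (pos w n.+1); [lia | rewrite sig_bstep ?sc ?eqxx //; lia].
  exists i; first lia.
  rewrite (sig_bstep V); last lia.
  by rewrite si; case: eqP => //; lia.
- move=> i hi; have := cp_color V (i := i) ltac:(lia).
  by rewrite letter_bstep //; case: ifP => // _ zr; rewrite ltn_mod; lia.
Qed.

Lemma mem_map_iota1 (T : eqType) (P : pred nat) (F : nat -> T) n y :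
  reflect (exists i, [/\ 0 < i <= n, P i & F i = y]) (y \in [seq F i | i <- iota 1 n & P i]).
Proof.
apply: (iffP mapP) => [[i]|[i [hi Pi <-]]].
  by rewrite mem_filter mem_iota1 => /andP [Pi hi] ->; exists i.
by exists i => //; rewrite mem_filter mem_iota1 Pi.
Qed.

Lemma mem_pair_map_iota1 (P : pred nat) (G : nat -> nat) n x z :
  ((x, z) \in [seq (i, G i) | i <- iota 1 n & P i]) = [&& 0 < x <= n, P x & G x == z].
Proof.
apply/mem_map_iota1/idP => [[i [hi Pi [<- <-]]]|/and3P [hx Px /eqP <-]].
  by rewrite hi Pi eqxx.
by exists x.
Qed.

Lemma eq_pairE (u : cletter) a b : (u == (a, b)) = (u.1 == a) && (u.2 == b).
Proof. by case: u. Qed.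

Lemma mem_sup t S x : (x \in sup t S) = ((x, t) \in S).
Proof.
apply/mapP/idP => [[y]|h]; last by exists (x, t); rewrite // mem_filter eqxx.
by rewrite mem_filter => /andP [/eqP yt yS] ->; move: yt yS; case: y => a b /= ->.
Qed.

Definition lrmax (w : seq cletter) p :=
  all (fun j => (letter w j).1 < (letter w p).1) (iota 1 p.-1).

Definition cyc_sum r w i := sumn [seq (letter w k).2 | k <- cyc_of w i] %% r.

Lemma mem_Lmap w p z :
  ((p, z) \in Lmap w) = [&& 0 < p <= size w, lrmax w p & (letter w p).2 == z].
Proof. exact: mem_pair_map_iota1. Qed.

Lemma mem_Lmal w y :
  reflect (exists p, [/\ 0 < p <= size w, lrmax w p & letter w p = y]) (y \in Lmal w).
Proof. exact: mem_map_iota1. Qed.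

Lemma mem_Rmil b y :
  reflect (exists p, [/\ 0 < p <= size b, rmi b p & letter b p = y]) (y \in Rmil b).
Proof. exact: mem_map_iota1. Qed.

Lemma mem_Rmip b p z :
  ((p, z) \in Rmip b) = [&& 0 < p <= size b, rmi b p & (letter b p).2 == z].
Proof. exact: mem_pair_map_iota1. Qed.

Lemma mem_Max b p z :
  ((p, z) \in Max b) = [&& 0 < p <= size b, (letter b p).1 == p & (letter b p).2 == z].
Proof. exact: mem_pair_map_iota1. Qed.

Lemma mem_Min b p z :
  ((p, z) \in Min b) = [&& 0 < p <= size b, (letter b p).1 == 1 & (letter b p).2 == z].
Proof. exact: mem_pair_map_iota1. Qed.

Lemma mem_Cyc r w p z : ((p, z) \in Cyc r w) =
  [&& 0 < p <= size w, all (fun k => p <= k) (cyc_of w p) & cyc_sum r w p == z].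
Proof. exact: mem_pair_map_iota1. Qed.

Section ColoredPerm.
Variables (r N : nat) (w : seq cletter).
Hypothesis V : colored_perm r N w.

Lemma mem_cyc_of i y : 0 < i <= N ->
  (y \in cyc_of w i) <-> exists k, iter k (sig w) i = y.
Proof.
move=> hi; rewrite /cyc_of mem_undup; split; first by case/mapP => k _ ->; exists k.
case=> k <-.
have [p hp ep] : exists2 p, 0 < p <= size (iota 1 N) & iter p (sig w) i = i.
  apply: iter_return; last by rewrite mem_iota1.
    by move=> x; rewrite !mem_iota1; apply: (cp_sig_range V).
  by move=> x y'; rewrite !mem_iota1; apply: (cp_sig_inj V).
rewrite (iter_modn k ep); apply/mapP; exists (k %% p) => //.
rewrite mem_iota (cp_size V) add0n; rewrite size_iota in hp.
by have := ltn_pmod k (proj1 (andP hp)); lia.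
Qed.

Lemma cyc_of_range i y : 0 < i <= N -> y \in cyc_of w i -> 0 < y <= N.
Proof.
move=> hi /(mem_cyc_of _ hi) [k <-]; elim: k => //= k IH; exact: (cp_sig_range V).
Qed.

Lemma cyc_of_closed i y : 0 < i <= N -> y \in cyc_of w i -> sig w y \in cyc_of w i.
Proof. by move=> hi /(mem_cyc_of _ hi) [k <-]; apply/(mem_cyc_of _ hi); exists k.+1. Qed.

Lemma act_range v : 0 < v.1 <= N -> 0 < (act r w v).1 <= N.
Proof. exact: (cp_sig_range V). Qed.

Lemma iter_act_range v k : 0 < v.1 <= N -> 0 < (iter k (act r w) v).1 <= N.
Proof. by move=> hv; elim: k => //= k IH; apply: act_range. Qed.

Hypothesis r0 : 0 < r.
Hypothesis N0 : 0 < N.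

Lemma lmic_len_return : 0 < lmic_len r w /\ iter (lmic_len r w) (act r w) (1, 0) = (1, 0).
Proof.
set g := act r w; set a : cletter := (1, 0).
set s := [seq (x, t) | x <- iota 1 N, t <- iota 0 r].
have ms v : (v \in s) = (0 < v.1 <= N) && (v.2 < r).
  case: v => x t /=; apply/allpairsP/idP.
    case=> [[x' t']] [hx ht [-> ->]].
    by move: hx ht; rewrite /= mem_iota1 mem_iota => -> /=; lia.
  by move/andP => [h1 h2]; exists (x, t); rewrite mem_iota1 mem_iota /=; split => //; lia.
have [p hp ep] : exists2 p, 0 < p <= size s & iter p g a = a.
  apply: iter_return; last by rewrite ms /=; lia.
    by move=> v; rewrite !ms => /andP [/act_range -> _]; rewrite ltn_pmod.
  move=> [x t] [x' t']; rewrite !ms /= => /andP [hx ht] /andP [hx' ht'] [e1 e2].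
  have ex : x = x' by apply: (cp_sig_inj V).
  by subst x'; move/eqP: e2; rewrite eqn_modDl !modn_small // => /eqP ->.
rewrite size_allpairs !size_iota in hp.
have hs : has (fun k => iter k.+1 g a == a) (iota 0 (N * r)).
  by apply/hasP; exists p.-1; rewrite ?mem_iota ?prednK ?ep //; lia.
rewrite /lmic_len (cp_size V); split=> //.
have := nth_find 0 hs; rewrite nth_iota ?add0n; first by move/eqP.
by move: hs; rewrite has_find size_iota.
Qed.

Lemma mem_Lmic y :
  (y \in Lmic r w) <-> exists k, reach_via (act r w) (fun v => y.1 < v.1) (act r w (1, 0)) y k.
Proof.
set g := act r w; set a : cletter := (1, 0).
have [m0 em] := lmic_len_return; move: m0 em; rewrite -/g -/a.
set m := lmic_len r w => m0 em.
have Dit k : 0 < (iter k g a).1 <= N by apply: iter_act_range; rewrite /=; lia.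
rewrite /Lmic -/m -/g -/a; set u := [seq iter k.+1 g a | k <- iota 0 m].
have nu k : k < m -> nth (0, 0) u k = iter k.+1 g a.
  by move=> km; rewrite (nth_map 0) ?size_iota // nth_iota.
rewrite /Lmil size_map size_iota; split.
  case/mapP => k; rewrite mem_filter mem_iota /= => /andP [/allP H km] ->.
  exists k; rewrite /reach_via -iterSr nu //; split=> // k' kk.
  rewrite -iterSr -(nu k'); last lia.
  by rewrite -nu //; apply: H; rewrite mem_iota; lia.
case=> k [ek Hk]; rewrite -iterSr in ek.
have km : k < m.
  rewrite ltnNge; apply/negP => mk.
  have := Hk m.-1 ltac:(lia); rewrite -iterSr prednK // em -ek.
  have -> : a.1 = 1 by [].
  by move=> lt; have /andP [h _] := Dit k.+1; move: (leq_trans lt h); rewrite ltnn.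
apply/mapP; exists k; last by rewrite nu.
rewrite mem_filter mem_iota /= km andbT; apply/allP => k'; rewrite mem_iota => hk'.
rewrite !nu ?ek; try lia.
by rewrite iterSr; apply: Hk; lia.
Qed.

End ColoredPerm.

Definition lrmax_bcode_spec r w := forall p v z, z < r ->
  [&& 0 < p <= size w, lrmax w p & letter w p == (v, z)] =
  [&& 0 < v <= size w, rmi (bcode r w) v & letter (bcode r w) v == (p, oppc r z)].

Definition cyc_bcode_spec r w := forall i s, 0 < i <= size w -> s < r ->
  ((i, s) \in Cyc r w) = (letter (bcode r w) i == (i, oppc r s)).

Definition lmic_bcode_spec r w := forall x z, 0 < x <= size w -> z < r ->
  ((x, z) \in Lmic r w) = (letter (bcode r w) x == (1, oppc r z)).

Lemma sumn_map_rem (T : eqType) (f : T -> nat) s x :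
  x \in s -> sumn (map f s) = f x + sumn (map f (rem x s)).
Proof. by move=> xs; rewrite (perm_sumn (perm_map f (perm_to_rem xs))). Qed.

Section BcodeStep.
Variables (r n : nat) (w : seq cletter).
Hypothesis V : colored_perm r n.+1 w.

Local Notation c := (pos w n.+1).
Local Notation zc := (letter w (pos w n.+1)).2.
Local Notation w' := (bstep r w n).
Local Notation b' := (bcode r (bstep r w n)).

Let V' : colored_perm r n w' := colored_perm_bstep V.

Lemma pos_top_range : 0 < c <= n.+1. Proof. by case: (pos_top V). Qed.
Lemma sig_pos_top : sig w c = n.+1. Proof. by case: (pos_top V). Qed.
Lemma zc_lt : zc < r. Proof. exact/(cp_color V)/pos_top_range. Qed.
Lemma letter_pos_top : letter w c = (n.+1, zc).
Proof. by move: sig_pos_top; rewrite /sig; case: (letter w c) => x y /= ->. Qed.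

Lemma size_bcode_bstep : size b' = n.
Proof. by rewrite size_bcode (cp_size V'). Qed.

Lemma bcodeE : bcode r w = rcons b' (c, oppc r zc).
Proof. exact/bcode_rcons/(cp_size V). Qed.

Lemma letter_bcode v : 0 < v <= n -> letter (bcode r w) v = letter b' v.
Proof.
by move=> hv; rewrite bcodeE /letter nth_rcons size_bcode_bstep; case: ifP => //; lia.
Qed.

Lemma letter_bcode_top : letter (bcode r w) n.+1 = (c, oppc r zc).
Proof. by rewrite bcodeE /letter nth_rcons size_bcode_bstep /= ltnn eqxx. Qed.

Lemma letter_bstep_neq i : 0 < i <= n -> i != c -> letter w' i = letter w i.
Proof. by move=> hi ic; rewrite letter_bstep // (negbTE ic). Qed.

Lemma rmi_bcode v : 0 < v <= n -> rmi (bcode r w) v = rmi b' v && ((letter b' v).1 < c).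
Proof.
move=> hv; rewrite /rmi size_bcode (cp_size V) size_bcode_bstep letter_bcode //.
have -> : n.+1 - v = (n - v) + 1 by lia.
rewrite iotaD all_cat /= andbT.
have -> : v.+1 + (n - v) = n.+1 by lia.
rewrite letter_bcode_top /=; congr andb; apply: eq_in_all => j; rewrite mem_iota => hj.
by rewrite letter_bcode //; lia.
Qed.

Lemma rmi_bcode_top : rmi (bcode r w) n.+1.
Proof. by rewrite /rmi size_bcode (cp_size V) subnn. Qed.

Lemma lrmax_lt p : p < c -> lrmax w p = lrmax w' p.
Proof.
move=> pc; rewrite /lrmax; case: p pc => [|p] pc //=.
have hc := pos_top_range.
by apply: eq_in_all => j; rewrite mem_iota => hj; rewrite !letter_bstep_neq //; apply/eqP; lia.
Qed.

Lemma lrmax_pos_top : lrmax w c.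
Proof.
apply/allP => j; rewrite mem_iota => hj; have hc := pos_top_range.
rewrite -/(sig w j) -/(sig w c) sig_pos_top.
have : sig w j != n.+1 by rewrite (sig_eq_top V); lia.
by have := cp_sig_range V (i := j) ltac:(lia); lia.
Qed.

Lemma lrmax_gt p : c < p -> lrmax w p = false.
Proof.
move=> cp; apply/negP => /allP /(_ c); have hc := pos_top_range.
rewrite mem_iota => /(_ ltac:(lia)); rewrite -/(sig w p) -/(sig w c) sig_pos_top.
case: (leqP p n.+1) => pn; first by have := cp_sig_range V (i := p) ltac:(lia); lia.
by rewrite /sig /letter nth_default // (cp_size V); lia.
Qed.

Lemma lrmax_letter p v z :
  [&& 0 < p <= n.+1, lrmax w p & letter w p == (v, z)] =
  (p < c) && [&& 0 < p <= n, lrmax w' p & letter w' p == (v, z)]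
  || [&& p == c, v == n.+1 & z == zc].
Proof.
have hc := pos_top_range.
case: (ltngtP p c) => pc /=.
- have [->|p0] := posnP p; first by [].
  rewrite lrmax_lt // -(letter_bstep_neq (i := p)); [|lia|apply/eqP; lia].
  by rewrite orbF; congr andb; congr andb; apply/idP/idP; lia.
- by rewrite lrmax_gt // andbF.
- by rewrite pc lrmax_pos_top letter_pos_top xpair_eqE hc /= eq_sym [z == zc]eq_sym.
Qed.

Lemma rmi_letter p v z :
  [&& 0 < v <= n.+1, rmi (bcode r w) v & letter (bcode r w) v == (p, z)] =
  [&& 0 < v <= n, rmi b' v, letter b' v == (p, z) & p < c]
  || [&& v == n.+1, p == c & z == oppc r zc].
Proof.
case: (ltngtP v n.+1) => vn.
- have [->|v0] := posnP v; first by [].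
  rewrite rmi_bcode ?letter_bcode; try lia.
  have -> : (v <= n) = true by lia.
  rewrite orbF /=; case: (rmi b' v) => //=.
  by case: eqP => [-> | _] /=; rewrite ?andbT ?andbF.
- have -> : (v <= n) = false by lia.
  by rewrite !andbF.
- subst v; rewrite rmi_bcode_top letter_bcode_top xpair_eqE /= ltnn /=.
  by rewrite [c == p]eq_sym [oppc r zc == z]eq_sym.
Qed.

Lemma lrmax_bcode_step : lrmax_bcode_spec r w' -> lrmax_bcode_spec r w.
Proof.
move=> IH p v z zr.
rewrite (cp_size V) lrmax_letter rmi_letter.
have := IH p v z zr; rewrite (cp_size V') => ->; rewrite (eqn_oppc zr zc_lt).
congr orb; last by apply/idP/idP => /and3P [-> -> ->].
apply/idP/idP; first by case/andP => pc /and3P [-> -> ->].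
by case/and4P => -> -> -> ->.
Qed.

Lemma reach_sig_bstep i y : 0 < i <= n -> y != n.+1 ->
  (exists k, iter k (sig w') i = y) <-> (exists k, iter k (sig w) i = y).
Proof.
move=> hi yn.
have E g x : (exists k, reach_via g predT x y k) <-> (exists k, iter k g x = y).
  by split=> [[k [e _]]|[k e]]; exists k.
rewrite -!E; apply: (@reach_via_shortcut _ (fun x => 0 < x <= n.+1) (pred1 n.+1)) => //.
- by move=> x hx; apply: (cp_sig_range V).
- move=> x hx /eqP xn /eqP fx; apply/eqP => ffx; apply: xn.
  by rewrite fx in ffx; apply: (cp_sig_inj V) => //; rewrite ?fx ?ffx //; lia.
- by move=> x hx /eqP xn; rewrite (sig_bstep V) /=; [case: eqP => // -> | lia].
- lia.
- apply/eqP; lia.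
Qed.

Lemma mem_cyc_of_bstep i y : 0 < i <= n ->
  (y \in cyc_of w' i) = (y != n.+1) && (y \in cyc_of w i).
Proof.
move=> hi; apply/idP/andP => [yin | [yn yin]].
  have yn : y != n.+1 by have := cyc_of_range V' hi yin; lia.
  by split=> //; apply/(mem_cyc_of V) => //; first lia; apply/reach_sig_bstep/(mem_cyc_of V').
by apply/(mem_cyc_of V') => //; apply/reach_sig_bstep/(mem_cyc_of V) => //; lia.
Qed.

Lemma cyc_min_bstep i : 0 < i <= n ->
  all (fun k => i <= k) (cyc_of w' i) = all (fun k => i <= k) (cyc_of w i).
Proof.
move=> hi; apply/allP/allP => H y; last by rewrite mem_cyc_of_bstep // => /andP [_]; apply: H.
by case: (eqVneq y n.+1) => [->|yn] yin; [lia | apply: H; rewrite mem_cyc_of_bstep // yn].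
Qed.

Lemma top_in_cyc_of i : 0 < i <= n -> (n.+1 \in cyc_of w i) = (c \in cyc_of w i).
Proof.
move=> hi; have hi' : 0 < i <= n.+1 by lia.
apply/idP/idP => [|/(cyc_of_closed V hi')]; last by rewrite sig_pos_top.
case/(mem_cyc_of V _ hi') => [[|k] /= e]; first lia.
have ks : iter k (sig w) i \in cyc_of w i by apply/(mem_cyc_of V _ hi'); exists k.
suff <- : iter k (sig w) i = c by [].
by apply/eqP; rewrite -(sig_eq_top V) ?e //; apply: (cyc_of_range V hi').
Qed.

Lemma pos_top_neq i : 0 < i <= n -> n.+1 \in cyc_of w i -> c != n.+1.
Proof.
move=> hi; have hi' : 0 < i <= n.+1 by lia.
case/(mem_cyc_of V _ hi') => k e; apply/eqP => cN.
have fixN : sig w n.+1 = n.+1 by rewrite -{1}cN sig_pos_top.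
elim: k e => [/= e|k IH /= e]; first lia.
apply: IH; apply: (cp_sig_inj V); rewrite ?e ?fixN //; last lia.
by apply: (cyc_of_range V hi'); apply/(mem_cyc_of V _ hi'); exists k.
Qed.

(* Removing n+1 from its cycle moves its color onto its predecessor c. *)
Lemma cyc_sum_bstep i : 0 < i <= n -> cyc_sum r w' i = cyc_sum r w i.
Proof.
move=> hi; have hi' : 0 < i <= n.+1 by lia.
set s := cyc_of w i; set f := fun k => (letter w k).2; set f' := fun k => (letter w' k).2.
have us : uniq s := undup_uniq _.
have fE y : y \in s -> y != n.+1 -> y != c -> f' y = f y.
  by move=> ys yn yc; rewrite /f /f' letter_bstep_neq //; have := cyc_of_range V hi' ys; lia.
have pe : perm_eq (cyc_of w' i) (rem n.+1 s).
  apply: uniq_perm; rewrite ?rem_uniq ?undup_uniq // => y.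
  by rewrite mem_cyc_of_bstep // mem_rem_uniq.
rewrite /cyc_sum -/s -/f -/f' (perm_sumn (perm_map _ pe)).
case: (boolP (n.+1 \in s)) => Ns; last first.
  rewrite rem_id //; congr (_ %% r); congr sumn; apply/eq_in_map => y ys.
  have cNs : c \notin s by rewrite /s -top_in_cyc_of.
  by rewrite fE //; [apply: contraNneq Ns => <- | apply: contraNneq cNs => <-].
have cs : c \in rem n.+1 s.
  by rewrite mem_rem_uniq // inE /= -top_in_cyc_of // Ns andbT (pos_top_neq hi).
rewrite (sumn_map_rem _ Ns) (sumn_map_rem _ cs) (sumn_map_rem _ cs).
have f'c : f' c = (f n.+1 + f c) %% r.
  have := pos_top_range; move: cs; rewrite mem_rem_uniq // inE => /andP [/eqP cN _] hc.
  by rewrite /f' letter_bstep ?eqxx //; lia.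
have -> : sumn [seq f' y | y <- rem c (rem n.+1 s)] = sumn [seq f y | y <- rem c (rem n.+1 s)].
  congr sumn; apply/eq_in_map => y; rewrite mem_rem_uniq ?rem_uniq // inE mem_rem_uniq // inE.
  by case/andP => yc /andP [yN ys]; apply: fE.
by rewrite f'c modnDml addnA.
Qed.

Lemma mem_Cyc_bstep i s : 0 < i <= n -> ((i, s) \in Cyc r w') = ((i, s) \in Cyc r w).
Proof.
move=> hi; rewrite !mem_Cyc (cp_size V) (cp_size V') cyc_min_bstep // cyc_sum_bstep //.
by rewrite hi (_ : i <= n.+1) //; lia.
Qed.

Lemma mem_Cyc_top s : s < r -> ((n.+1, s) \in Cyc r w) = (c == n.+1) && (s == zc).
Proof.
move=> sr; have hN : 0 < n.+1 <= n.+1 by lia.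
rewrite mem_Cyc (cp_size V) hN /=.
case: (eqVneq c n.+1) => cN /=.
  have fixN : sig w n.+1 = n.+1 by rewrite -{1}cN sig_pos_top.
  have pe : perm_eq (cyc_of w n.+1) [:: n.+1].
    apply: uniq_perm => //; first exact: undup_uniq.
    move=> y; rewrite inE; apply/idP/eqP => [|->]; last by apply/(mem_cyc_of V _ hN); exists 0.
    by case/(mem_cyc_of V _ hN) => k <-; elim: k => //= k ->.
  rewrite (eq_all_r (perm_mem pe)) /= leqnn /cyc_sum (perm_sumn (perm_map _ pe)) /= addn0.
  by rewrite -{1}cN modn_small ?zc_lt // eq_sym.
apply/negbTE/negP => /andP [/allP /(_ (sig w n.+1)) min _].
have /min : sig w n.+1 \in cyc_of w n.+1 by apply/(mem_cyc_of V _ hN); exists 1.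
have : sig w n.+1 != n.+1 by rewrite (sig_eq_top V hN) eq_sym.
by have := cp_sig_range V hN; lia.
Qed.

Lemma cyc_bcode_step : cyc_bcode_spec r w' -> cyc_bcode_spec r w.
Proof.
move=> IH i s hi sr; rewrite (cp_size V) in hi.
case: (ltnP i n.+1) => iN.
  by rewrite letter_bcode -?IH ?(cp_size V') ?mem_Cyc_bstep //; lia.
have -> : i = n.+1 by lia.
by rewrite mem_Cyc_top // letter_bcode_top xpair_eqE eqn_oppc ?zc_lt // [zc == s]eq_sym.
Qed.

Lemma act_bstep v : 0 < v.1 <= n ->
  act r w' v = if (act r w v).1 == n.+1 then act r w (act r w v) else act r w v.
Proof.
case: v => x t /= hx; rewrite -/(sig w x) (sig_eq_top V); last lia.
rewrite /act /= /sig letter_bstep //; case: eqP => [xc|_] //=.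
rewrite -/(sig w x) xc sig_pos_top; congr pair.
by rewrite -xc modnDml modnDmr addnA.
Qed.

Lemma act_top_isolated v : 0 < v.1 <= n ->
  (act r w v).1 == n.+1 -> (act r w (act r w v)).1 != n.+1.
Proof.
move=> hv /eqP gv; apply/negP => /eqP ggv.
have e1 : sig w v.1 = n.+1 := gv.
have e2 : sig w (sig w v.1) = n.+1 := ggv.
by rewrite e1 in e2; have := cp_sig_inj V (i := v.1) (j := n.+1); rewrite e1 e2; lia.
Qed.

Lemma reach_act_bstep (P : pred cletter) u y : 0 < u.1 <= n -> y.1 != n.+1 ->
  (forall v, v.1 == n.+1 -> P v) ->
  (exists k, reach_via (act r w') P u y k) <-> (exists k, reach_via (act r w) P u y k).
Proof.
move=> hu yN NP.
apply: (@reach_via_shortcut _ (fun v => 0 < v.1 <= n.+1) (fun v => v.1 == n.+1)) => //.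
- by move=> v hv; exact: (act_range V hv).
- by move=> v /= hv /eqP vN; apply: act_top_isolated; lia.
- by move=> v /= hv /eqP vN; apply: act_bstep; lia.
- by case/andP: hu => -> /leqW.
- by apply: contraTneq hu => ->; rewrite ltnn andbF.
Qed.

Hypothesis r0 : 0 < r.

Lemma mem_Lmic_bstep x z : 0 < x <= n -> ((x, z) \in Lmic r w') = ((x, z) \in Lmic r w).
Proof.
move=> hx; have n0 : 0 < n by lia.
set y := (x, z); set P := fun v : cletter => y.1 < v.1.
have NP v : v.1 == n.+1 -> P v by move/eqP; rewrite /P /= => ->; lia.
have yN : y.1 != n.+1 by apply/eqP; rewrite /=; lia.
have ha : 0 < (1, 0).1 <= n by rewrite /=; lia.
have hGa := act_range V (v := (1, 0)) ltac:(rewrite /=; lia).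
suff E : (exists k, reach_via (act r w') P (act r w' (1, 0)) y k) <->
         (exists k, reach_via (act r w) P (act r w (1, 0)) y k).
  apply/idP/idP => [/(mem_Lmic V' r0 n0 y) /E /(mem_Lmic V r0 (ltn0Sn n) y) //|].
  by move/(mem_Lmic V r0 (ltn0Sn n) y) /E /(mem_Lmic V' r0 n0 y).
rewrite act_bstep //; case: ifP => GaN.
  have := act_top_isolated ha GaN; have := act_range V hGa => hGGa GGaN.
  rewrite reach_act_bstep //; last lia.
  split=> [[k R]|[[|k]]]; first by exists k.+1; apply/reach_viaS; split=> //; apply: NP.
    by case=> e; move: yN; rewrite -e GaN.
  by case/reach_viaS => _ R; exists k.
by apply: reach_act_bstep => //; move/negbT: GaN; lia.
Qed.

Lemma mem_Lmic_top z : ((n.+1, z) \in Lmic r w) = (c == 1) && (z == zc).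
Proof.
have h1 : 0 < (1, 0).1 <= n.+1 by [].
have Ga : act r w (1, 0) = (sig w 1, (letter w 1).2).
  by rewrite /act addn0 modn_small //; apply: (cp_color V).
have -> : ((n.+1, z) \in Lmic r w) = (act r w (1, 0) == (n.+1, z)).
  apply/idP/eqP => [|e]; last by apply/(mem_Lmic V r0 (ltn0Sn n)); exists 0.
  case/(mem_Lmic V r0 (ltn0Sn n)) => [[[e _] //|k]].
  case/reach_viaS => lt _; have /andP [_ h] := act_range V h1.
  by move: (leq_trans lt h); rewrite ltnn.
rewrite Ga xpair_eqE (sig_eq_top V) // [1 == c]eq_sym.
by case: eqP => //= ->; rewrite eq_sym.
Qed.

Lemma lmic_bcode_step : lmic_bcode_spec r w' -> lmic_bcode_spec r w.
Proof.
move=> IH x z hx zr; rewrite (cp_size V) in hx.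
case: (ltnP x n.+1) => xn.
  by rewrite letter_bcode -?IH ?(cp_size V') ?mem_Lmic_bstep //; lia.
have -> : x = n.+1 by lia.
by rewrite mem_Lmic_top letter_bcode_top xpair_eqE eqn_oppc ?zc_lt // [zc == z]eq_sym.
Qed.

End BcodeStep.

Lemma bcode_specs r N w : 0 < r -> colored_perm r N w ->
  [/\ lrmax_bcode_spec r w, cyc_bcode_spec r w & lmic_bcode_spec r w].
Proof.
move=> r0; elim: N w => [|N IH] w V.
  have -> : w = [::] by apply/size0nil/(cp_size V).
  have no0 k : (0 < k <= 0) = false by lia.
  by split=> [p v z _|i s|x z] /=; rewrite ?no0 //.
have [J K M] := IH _ (colored_perm_bstep V).
split; [exact: (lrmax_bcode_step V) | exact: (cyc_bcode_step V) | exact: (lmic_bcode_step V)].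
Qed.

Section Statistics.
Variables (r n : nat) (w : seq cletter).
Hypotheses (r0 : 0 < r) (n0 : 0 < n) (V : colored_perm r n w).

Local Notation b := (bcode r w).

Lemma size_b : size b = n. Proof. by rewrite size_bcode (cp_size V). Qed.

Lemma mem_Cyc_Max x t : t < r -> ((x, t) \in Cyc r w) = ((x, oppc r t) \in Max b).
Proof.
move=> tr; have [_ K _] := bcode_specs r0 V.
rewrite mem_Max size_b; case: (boolP (0 < x <= n)) => hx /=.
  by rewrite K ?(cp_size V) // eq_pairE.
by rewrite mem_Cyc (cp_size V) (negbTE hx).
Qed.

Lemma mem_Lmic_Min x t : t < r -> ((x, t) \in Lmic r w) = ((x, oppc r t) \in Min b).
Proof.
move=> tr; have [_ _ M] := bcode_specs r0 V.
rewrite mem_Min size_b; case: (boolP (0 < x <= n)) => hx /=.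
  by rewrite M ?(cp_size V) // eq_pairE.
apply/negbTE/negP => /(mem_Lmic V r0 n0) [k [e _]].
move/negP: hx; apply; rewrite -[x]/((x, t).1) -e.
by apply: (iter_act_range V); apply: (act_range V); rewrite /=; lia.
Qed.

Lemma mem_Lmap_Rmil x t : t < r -> ((x, t) \in Lmap w) = ((x, oppc r t) \in Rmil b).
Proof.
move=> tr; have [J _ _] := bcode_specs r0 V.
rewrite mem_Lmap (cp_size V); apply/idP/mem_Rmil.
  case/and3P => hx lr et; exists (letter w x).1.
  have := J x (letter w x).1 t tr; rewrite (cp_size V) hx lr eq_pairE eqxx et /=.
  by move/esym/and3P => [hv rv /eqP e]; rewrite size_b.
case=> v [hv rv e]; have := J x v t tr; rewrite (cp_size V) -size_b hv rv e eqxx /=.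
by case/and3P => -> -> /eqP ->; rewrite eqxx.
Qed.

Lemma mem_Lmal_Rmip v t : t < r -> ((v, t) \in Lmal w) = ((v, oppc r t) \in Rmip b).
Proof.
move=> tr; have [J _ _] := bcode_specs r0 V.
rewrite mem_Rmip size_b; apply/mem_Lmal/idP.
  case=> p [hp lr e]; rewrite (cp_size V) in hp.
  have := J p v t tr; rewrite (cp_size V) hp lr e eqxx /=.
  by case/esym/and3P => -> ->; rewrite eq_pairE => /andP [_ ->].
case/and3P => hv rv e2; exists (letter b v).1.
have := J (letter b v).1 v t tr.
rewrite (cp_size V) hv rv [letter b v == _]eq_pairE eqxx e2 /=.
by case/and3P => hp lr /eqP e.
Qed.

End Statistics.

Lemma sup_oppc r (A B : seq cletter) : 0 < r ->
  (forall x t, t < r -> ((x, t) \in A) = ((x, oppc r t) \in B)) ->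
  sup 0 A =i sup 0 B /\ (forall t, 1 <= t <= r - 1 -> sup t A =i sup (r - t) B).
Proof.
move=> r0 AB; split=> [x|t ht x]; rewrite !mem_sup AB ?oppcE //; try lia.
by have /negbTE -> : t != 0 by lia.
Qed.

Theorem lemma3p4 (r n : nat) (w : seq (nat * nat)) :
  0 < r -> 0 < n ->
  perm_eq (map fst w) (iota 1 n) ->
  all (fun x => x.2 < r) w ->
  let b := bcode r w in
  [/\ sup 0 (Cyc r w) =i sup 0 (Max b)
      /\ (forall t, 1 <= t <= r - 1 -> sup t (Cyc r w) =i sup (r - t) (Max b)),
      sup 0 (Lmic r w) =i sup 0 (Min b)
      /\ (forall t, 1 <= t <= r - 1 -> sup t (Lmic r w) =i sup (r - t) (Min b)),
      sup 0 (Lmap w) =i sup 0 (Rmil b)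
      /\ (forall t, 1 <= t <= r - 1 -> sup t (Lmap w) =i sup (r - t) (Rmil b))
    & sup 0 (Lmal w) =i sup 0 (Rmip b)
      /\ (forall t, 1 <= t <= r - 1 -> sup t (Lmal w) =i sup (r - t) (Rmip b))].
Proof.
move=> r0 n0 pe ac b; have V := colored_permP pe ac.
split; apply: sup_oppc => // x t tr.
- exact: mem_Cyc_Max r0 V x t tr.
- exact: mem_Lmic_Min r0 n0 V x t tr.
- exact: mem_Lmap_Rmil r0 V x t tr.
- exact: mem_Lmal_Rmip r0 V x t tr.
Qed.
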